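(* Let $u$ be a unit vector of the form $\frac{1}{\sqrt2^{\,k}\sqrt5^{\,\ell}}\begin{bmatrix}\alpha\\\beta\end{bmatrix}$ with $k,\ell\in\mathbb N$, $0\le k\le 2$, $\alpha,\beta\in\mathbb Z[i]$, whose least denominator exponent is $(k,\ell)$. Then there exists a Clifford circuit $W$ such that $Wu$ has least denominator exponent $(0,\ell)$.
   Context: A Clifford circuit is a product of the gates $\omega I$ (with $\omega=e^{i\pi/4}$), $H=\frac{1}{\sqrt2}\begin{bmatrix}1&1\\1&-1\end{bmatrix}$, $S=\begin{bmatrix}1&0\\0&i\end{bmatrix}$ and their inverses. For a vector $v\in\mathbb C^2$ that can be written as $\frac{1}{\sqrt2^{\,k}\sqrt5^{\,\ell}}\begin{bmatrix}\alpha\\\beta\end{bmatrix}$ with $k,\ell\in\mathbb N$, $0\le k\le2$, $\alpha,\beta\in\mathbb Z[i]$, the least $\sqrt2$-denominator exponent (resp. least $\sqrt5$-denominator exponent) is the least $k$ (resp. least $\ell$) for which such a representation exists, and the least denominator exponent of $v$ is the pair (least $\sqrt2$-exponent, least $\sqrt5$-exponent). *)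

(* complex numbers modelled by algC (algebraic complex numbers),
   which contain i, sqrt 2, sqrt 5 and all entries involved. *)
From HB Require Import structures.
From mathcomp Require Import all_boot all_order all_algebra all_field.
Set Implicit Arguments. Unset Strict Implicit. Unset Printing Implicit Defensive.
Import Order.TTheory GRing.Theory Num.Theory.
Local Open Scope ring_scope.

Definition gaussian (z : algC) : Prop :=
  exists a b : int, z = a%:~R + b%:~R * 'i.

Definition sqrt2 : algC := sqrtC 2.
Definition sqrt5 : algC := sqrtC 5.
Definition omega : algC := (1 + 'i) / sqrt2.

Definition vec2 (a b : algC) : 'cV[algC]_2 :=
  \col_(i < 2) (if (i : nat) == 0%N then a else b).
Definition mx2 (a b c d : algC) : 'M[algC]_2 :=
  \matrix_(i < 2, j < 2)
    (if (i : nat) == 0%N then (if (j : nat) == 0%N then a else b)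
     else (if (j : nat) == 0%N then c else d)).

Definition Hgate : 'M[algC]_2 := sqrt2^-1 *: mx2 1 1 1 (-1).
Definition Sgate : 'M[algC]_2 := mx2 1 0 0 'i.
Definition Sinv  : 'M[algC]_2 := mx2 1 0 0 (- 'i).
Definition Wgate : 'M[algC]_2 := omega%:M.
Definition Winv  : 'M[algC]_2 := (omega^-1)%:M.

(* generators of Clifford circuits: omega I, H, S and their inverses (H^-1 = H) *)
Definition clifford_gen (G : 'M[algC]_2) : Prop :=
  G = Wgate \/ G = Winv \/ G = Hgate \/ G = Sgate \/ G = Sinv.

Inductive clifford : 'M[algC]_2 -> Prop :=
| clifford_id : clifford 1%:M
| clifford_mul G W : clifford_gen G -> clifford W -> clifford (G *m W).

Definition has_rep (v : 'cV[algC]_2) (k l : nat) : Prop :=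
  (k <= 2)%N /\ exists alpha beta : algC, gaussian alpha /\ gaussian beta /\
    v = (sqrt2 ^+ k * sqrt5 ^+ l)^-1 *: vec2 alpha beta.

Definition lde (v : 'cV[algC]_2) (k l : nat) : Prop :=
  ((exists l', has_rep v k l') /\ (forall k' l', has_rep v k' l' -> (k <= k')%N)) /\
  ((exists k', has_rep v k' l) /\ (forall k' l', has_rep v k' l' -> (l <= l')%N)).

Definition unit_vec (v : 'cV[algC]_2) : Prop :=
  \sum_(i < 2) `|v i 0| ^+ 2 = 1.

(* If u = (sqrt2^k sqrt5^l)^-1 [a + b i; c + d i] is a unit vector, then
   a^2 + b^2 + c^2 + d^2 = 2^k 5^l.  Squares are 0 mod 4 or 1 mod 8, so for
   k >= 3 all four coordinates are even and k can be lowered to at most 2; for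
   k = 2 they are all even (then k = 0 works) or all odd (then omega^-1 brings
   k down to 1); for k = 1 exactly two of them are odd, and according to how
   the odd ones are placed, one of omega^-1, H, H S makes every coordinate
   even and reaches k = 0.  Clifford gates never touch the sqrt5-exponent and
   are invertible, so a representation of W u with a smaller sqrt5-exponent
   would give one of u, against the minimality of l. *)

From mathcomp Require Import all_boot all_order all_algebra all_field.
From mathcomp Require Import ring zify.
Set Implicit Arguments. Unset Strict Implicit. Unset Printing Implicit Defensive.
Import Order.TTheory GRing.Theory Num.Theory.
Local Open Scope ring_scope.

Lemma sqrt2K : sqrt2 * sqrt2 = 2.
Proof. by rewrite -expr2 sqrtCK. Qed.

Lemma sqrt2_neq0 : sqrt2 != 0.
Proof. by rewrite sqrtC_eq0 pnatr_eq0. Qed.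

Lemma sqrt5_neq0 : sqrt5 != 0.
Proof. by rewrite sqrtC_eq0 pnatr_eq0. Qed.

Lemma mulCii : 'i * 'i = -1 :> algC.
Proof. by rewrite -expr2 sqrCi. Qed.

Lemma omega_mul_conj : omega * ((1 - 'i) / sqrt2) = 1.
Proof. by rewrite /omega; field: sqrt2K mulCii; exact: sqrt2_neq0. Qed.

Lemma omega_neq0 : omega != 0.
Proof.
apply/eqP => omega0; move: omega_mul_conj.
by rewrite omega0 mul0r => /eqP; rewrite eq_sym oner_eq0.
Qed.

Lemma omegaV : omega^-1 = (1 - 'i) / sqrt2.
Proof. by apply: (mulfI omega_neq0); rewrite mulfV ?omega_neq0 // omega_mul_conj. Qed.

Lemma scale_vec2 c a b : c *: vec2 a b = vec2 (c * a) (c * b).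
Proof. by apply/matrixP => i j; rewrite !mxE; case: ifP. Qed.

Lemma scale_mx2 c p q r s : c *: mx2 p q r s = mx2 (c * p) (c * q) (c * r) (c * s).
Proof. by apply/matrixP => i j; rewrite !mxE; case: ifP; case: ifP. Qed.

Lemma mul_mx2_vec2 p q r s x y :
  mx2 p q r s *m vec2 x y = vec2 (p * x + q * y) (r * x + s * y).
Proof. by apply/matrixP => i j; rewrite !mxE big_ord_recl big_ord1 !mxE /=; case: ifP. Qed.

Lemma mul_mx2 p q r s p' q' r' s' :
  mx2 p q r s *m mx2 p' q' r' s' =
  mx2 (p * p' + q * r') (p * q' + q * s') (r * p' + s * r') (r * q' + s * s').
Proof.
by apply/matrixP => i j; rewrite !mxE big_ord_recl big_ord1 !mxE /=; case: ifP; case: ifP.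
Qed.

Lemma mx2_1 : 1%:M = mx2 1 0 0 1 :> 'M[algC]_2.
Proof. by apply/matrixP => -[[|[|i]] ?] -[[|[|j]] ?]; rewrite !mxE. Qed.

Definition gint (a b : int) : algC := a%:~R + b%:~R * 'i.

Definition gvec (k l : nat) (a b c d : int) : 'cV[algC]_2 :=
  (sqrt2 ^+ k * sqrt5 ^+ l)^-1 *: vec2 (gint a b) (gint c d).

Definition gauss_rep (v : 'cV[algC]_2) (k l : nat) : Prop :=
  exists a b c d : int, v = gvec k l a b c d.

Lemma has_repE v k l : has_rep v k l <-> (k <= 2)%N /\ gauss_rep v k l.
Proof.
split=> [[k2 [_ [_ [[a [b ->]] [[c [d ->]] ->]]]]] | [k2 [a [b [c [d ->]]]]]].
  by split=> //; exists a, b, c, d.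
by split=> //; exists (gint a b), (gint c d); do !split; [exists a, b | exists c, d].
Qed.

Lemma Wgate_gvec k l a b c d :
  Wgate *m gvec k l a b c d = gvec k.+1 l (a - b) (a + b) (c - d) (c + d).
Proof.
rewrite /Wgate /gvec mul_scalar_mx scalerA !scale_vec2 /omega /gint exprS.
congr vec2; rewrite !(intrD, intrN); field: mulCii.
all: by rewrite !expf_neq0 ?sqrt2_neq0 ?sqrt5_neq0.
Qed.

Lemma Winv_gvec k l a b c d :
  Winv *m gvec k l a b c d = gvec k.+1 l (a + b) (b - a) (c + d) (d - c).
Proof.
rewrite /Winv /gvec mul_scalar_mx scalerA !scale_vec2 omegaV /gint exprS.
congr vec2; rewrite !(intrD, intrN); field: mulCii.
all: by rewrite !expf_neq0 ?sqrt2_neq0 ?sqrt5_neq0.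
Qed.

Lemma Hgate_gvec k l a b c d :
  Hgate *m gvec k l a b c d = gvec k.+1 l (a + c) (b + d) (a - c) (b - d).
Proof.
rewrite /Hgate /gvec -scalemxAl -scalemxAr mul_mx2_vec2 !scalerA !scale_vec2.
rewrite /gint exprS.
congr vec2; rewrite !(intrD, intrN); field.
all: by rewrite !expf_neq0 ?sqrt2_neq0 ?sqrt5_neq0.
Qed.

Lemma Sgate_gvec k l a b c d : Sgate *m gvec k l a b c d = gvec k l a b (- d) c.
Proof.
rewrite /Sgate /gvec -scalemxAr mul_mx2_vec2 /gint.
by congr (_ *: vec2 _ _); rewrite ?intrN; ring: mulCii.
Qed.

Lemma Sinv_gvec k l a b c d : Sinv *m gvec k l a b c d = gvec k l a b d (- c).
Proof.
rewrite /Sinv /gvec -scalemxAr mul_mx2_vec2 /gint.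
by congr (_ *: vec2 _ _); rewrite ?intrN; ring: mulCii.
Qed.

Lemma gvec_halve k l a b c d :
  gvec k.+2 l (2 * a) (2 * b) (2 * c) (2 * d) = gvec k l a b c d.
Proof.
rewrite /gvec !scale_vec2 /gint !exprS.
congr vec2; rewrite !intrM; field: sqrt2K.
all: by rewrite !expf_neq0 ?sqrt2_neq0 ?sqrt5_neq0.
Qed.

Lemma gauss_rep_even k l a b c d :
  (2 %| a)%Z -> (2 %| b)%Z -> (2 %| c)%Z -> (2 %| d)%Z ->
  gauss_rep (gvec k.+2 l a b c d) k l.
Proof.
move=> /dvdzP[a' ->] /dvdzP[b' ->] /dvdzP[c' ->] /dvdzP[d' ->].
by exists a', b', c', d'; rewrite !(mulrC _ 2) gvec_halve.
Qed.

Lemma clifford_gen_gauss_rep G v k l :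
  clifford_gen G -> gauss_rep v k l -> exists k', gauss_rep (G *m v) k' l.
Proof.
move=> + [a [b [c [d ->]]]].
case=> [|[|[|[|]]]] ->;
  rewrite ?Wgate_gvec ?Winv_gvec ?Hgate_gvec ?Sgate_gvec ?Sinv_gvec;
  by do 5 eexists.
Qed.

Lemma clifford_gauss_rep W v k l :
  clifford W -> gauss_rep v k l -> exists k', gauss_rep (W *m v) k' l.
Proof.
move=> cW; elim: cW k => [|G W' genG _ IH] k repv; first by exists k; rewrite mul1mx.
have [k' repWv] := IH k repv.
by rewrite -mulmxA; apply: clifford_gen_gauss_rep repWv.
Qed.

Lemma clifford_of_gen G : clifford_gen G -> clifford G.
Proof.
by move=> genG; rewrite -[G]mulmx1; apply: clifford_mul => //; apply: clifford_id.
Qed.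

Lemma clifford_mulmx W V : clifford W -> clifford V -> clifford (W *m V).
Proof.
elim=> [|G W' genG _ IH] cV; first by rewrite mul1mx.
by rewrite -mulmxA; apply: clifford_mul => //; apply: IH.
Qed.

Lemma clifford_gen_inv G :
  clifford_gen G -> exists2 G', clifford_gen G' & G' *m G = 1%:M.
Proof.
case=> [|[|[|[|]]]] ->.
- by exists Winv; [right; left | rewrite -scalar_mxM mulVf ?omega_neq0].
- by exists Wgate; [left | rewrite -scalar_mxM mulfV ?omega_neq0].
- exists Hgate; first by right; right; left.
  rewrite /Hgate -scalemxAl -scalemxAr scalerA mul_mx2 scale_mx2 mx2_1.
  by congr mx2; field: sqrt2K; apply: sqrt2_neq0.
- exists Sinv; first by right; right; right; right.
  by rewrite mul_mx2 mx2_1; congr mx2; ring: mulCii.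
- exists Sgate; first by right; right; right; left.
  by rewrite mul_mx2 mx2_1; congr mx2; ring: mulCii.
Qed.

Lemma clifford_inv W : clifford W -> exists2 V, clifford V & V *m W = 1%:M.
Proof.
elim=> [|G W' genG _ [V cV VW]].
  by exists 1%:M; [apply: clifford_id | rewrite mul1mx].
have [G' genG' G'G] := clifford_gen_inv genG.
exists (V *m G'); first by apply: clifford_mulmx cV (clifford_of_gen genG').
by rewrite mulmxA -(mulmxA V) G'G mulmx1.
Qed.

Lemma normC2_gint a b : `|gint a b| ^+ 2 = (a * a + b * b)%:~R.
Proof. by rewrite /gint mulrC normC2_rect ?realz // intrD !intrM !expr2. Qed.

Lemma normC2_denom k l :
  `|(sqrt2 ^+ k * sqrt5 ^+ l)^-1| ^+ 2 = ((2 ^ k * 5 ^ l)%N%:R)^-1.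
Proof.
rewrite normfV normrM !normrX !ger0_norm ?sqrtC_ge0 ?ler0n //.
by rewrite exprVn exprMn -!exprM !(mulnC _ 2) !exprM !sqrtCK natrM !natrX.
Qed.

Lemma unit_gvec_norm k l a b c d :
  unit_vec (gvec k l a b c d) -> a * a + b * b + c * c + d * d = (2 ^ k * 5 ^ l)%N%:Z.
Proof.
rewrite /unit_vec big_ord_recl big_ord1 /gvec scale_vec2 !mxE /=.
rewrite !normrM !exprMn normC2_denom !normC2_gint -mulrDr -intrD.
have N_neq0 : ((2 ^ k * 5 ^ l)%N%:R : algC) != 0.
  by rewrite pnatr_eq0 muln_eq0 !expn_eq0.
move=> /(canRL (mulKf (invr_neq0 N_neq0))); rewrite invrK mulr1 => normE.
by apply: (@intr_inj algC); rewrite -addrA normE.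
Qed.

Lemma normr_omegaV : `|omega^-1| = 1.
Proof.
have normC2_1pi : `|1 + 'i| ^+ 2 = 2 :> algC.
  by have := normC2_rect (@real1 algC) (@real1 algC); rewrite mulr1 expr1n.
apply/eqP; rewrite normfV invr_eq1 -sqrp_eq1 // normrM normfV exprMn exprVn normC2_1pi.
by rewrite ger0_norm ?sqrtC_ge0 ?ler0n // expr2 sqrt2K mulfV ?pnatr_eq0.
Qed.

Lemma unit_vec_scale (c : algC) v : `|c| = 1 -> unit_vec v -> unit_vec (c *: v).
Proof.
rewrite /unit_vec => c1 <-; apply: eq_bigr => i _.
by rewrite mxE normrM c1 mul1r.
Qed.

Lemma sqrz_parity (a : int) :
  (2 %| a)%Z /\ (4 %| a * a)%Z \/ ~~ (2 %| a)%Z /\ (8 %| a * a - 1)%Z.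
Proof.
have [q [r [-> r_ge0 r_lt4]]] : exists q r : int, [/\ a = q * 4 + r, 0 <= r & r < 4].
  by exists (a %/ 4)%Z, (a %% 4)%Z; rewrite -divz_eq modz_ge0 ?ltz_pmod.
have : r = 0 \/ r = 1 \/ r = 2 \/ r = 3 by lia.
by case=> [|[|[|]]] ->; [left | right | left | right]; lia.
Qed.

Local Ltac sqrz_parity_cases a b c d :=
  case: (sqrz_parity a) (sqrz_parity b) (sqrz_parity c) (sqrz_parity d)
    => [] [] ? ? [] [] ? ? [] [] ? ? [] [] ? ?.

Lemma sum4_sqr_dvd8 (a b c d m : int) : a * a + b * b + c * c + d * d = 8 * m ->
  [/\ (2 %| a)%Z, (2 %| b)%Z, (2 %| c)%Z & (2 %| d)%Z].
Proof. by move=> sum8; sqrz_parity_cases a b c d; first [by split | lia]. Qed.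

Lemma sum4_sqr_2odd (a b c d n : int) :
  a * a + b * b + c * c + d * d = 2 * n -> ~~ (2 %| n)%Z ->
  [\/ (2 %| a + b)%Z /\ (2 %| c + d)%Z, (2 %| a + c)%Z /\ (2 %| b + d)%Z
    | (2 %| a + d)%Z /\ (2 %| b + c)%Z].
Proof.
move=> sum2 n_odd; sqrz_parity_cases a b c d;
  first [lia | by constructor 1; lia | by constructor 2; lia | by constructor 3; lia].
Qed.

Lemma sum4_sqr_4odd (a b c d n : int) :
  a * a + b * b + c * c + d * d = 4 * n -> ~~ (2 %| n)%Z ->
  [/\ (2 %| a)%Z, (2 %| b)%Z, (2 %| c)%Z & (2 %| d)%Z] \/
  [/\ ~~ (2 %| a)%Z, ~~ (2 %| b)%Z, ~~ (2 %| c)%Z & ~~ (2 %| d)%Z].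
Proof.
move=> sum4 n_odd; sqrz_parity_cases a b c d; first [lia | by left | by right].
Qed.

Lemma gauss_rep_sqrt2_le2 v k l :
  unit_vec v -> gauss_rep v k l -> exists2 k', (k' <= 2)%N & gauss_rep v k' l.
Proof.
move=> unitv; elim/ltn_ind: k => k IH repv.
have [k_le2 | k_gt2] := leqP k 2; first by exists k.
have [j kE] : exists j, k = j.+3 by exists (k - 3)%N; lia.
have [a [b [c [d vE]]]] := repv.
have /unit_gvec_norm sum : unit_vec (gvec j.+3 l a b c d) by rewrite -kE -vE.
have sum8 : a * a + b * b + c * c + d * d = 8 * (2 ^ j * 5 ^ l)%N%:Z.
  by rewrite sum !expnS; lia.
have [ea eb ec ed] := sum4_sqr_dvd8 sum8.
by apply: (IH j.+1); [lia | rewrite vE kE; apply: gauss_rep_even].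
Qed.

Lemma not_dvd2_exp5 l : ~~ (2 %| (5 ^ l)%N%:Z)%Z.
Proof. by rewrite dvdzE dvdn2 negbK oddX orbT. Qed.

Lemma clifford_clear_sqrt2_exp1 v l :
  unit_vec v -> gauss_rep v 1 l -> exists2 W, clifford W & gauss_rep (W *m v) 0 l.
Proof.
move=> unitv [a [b [c [d vE]]]].
have /unit_gvec_norm sum : unit_vec (gvec 1 l a b c d) by rewrite -vE.
have sum2 : a * a + b * b + c * c + d * d = 2 * (5 ^ l)%N%:Z.
  by rewrite sum expn1 PoszM.
have [[ab cd] | [ac bd] | [ad bc]] := sum4_sqr_2odd sum2 (not_dvd2_exp5 l).
- exists Winv; first by apply: clifford_of_gen; right; left.
  by rewrite vE Winv_gvec; apply: gauss_rep_even; lia.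
- exists Hgate; first by apply: clifford_of_gen; right; right; left.
  by rewrite vE Hgate_gvec; apply: gauss_rep_even; lia.
- exists (Hgate *m Sgate).
    apply: clifford_mulmx; apply: clifford_of_gen.
      by right; right; left.
    by right; right; right; left.
  by rewrite vE -mulmxA Sgate_gvec Hgate_gvec; apply: gauss_rep_even; lia.
Qed.

Lemma clifford_clear_sqrt2_exp2 v l :
  unit_vec v -> gauss_rep v 2 l -> exists2 W, clifford W & gauss_rep (W *m v) 0 l.
Proof.
move=> unitv [a [b [c [d vE]]]].
have /unit_gvec_norm sum : unit_vec (gvec 2 l a b c d) by rewrite -vE.
have sum4 : a * a + b * b + c * c + d * d = 4 * (5 ^ l)%N%:Z by rewrite sum PoszM.
have [[ea eb ec ed] | [oa ob oc od]] := sum4_sqr_4odd sum4 (not_dvd2_exp5 l).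
  by exists 1%:M; [apply: clifford_id | rewrite mul1mx vE; apply: gauss_rep_even].
have rep1 : gauss_rep (Winv *m v) 1 l.
  by rewrite vE Winv_gvec; apply: gauss_rep_even; lia.
have unit1 : unit_vec (Winv *m v).
  by rewrite mul_scalar_mx; apply: unit_vec_scale normr_omegaV unitv.
have [W cW repW] := clifford_clear_sqrt2_exp1 unit1 rep1.
exists (W *m Winv); last by rewrite -mulmxA.
by apply: clifford_mulmx cW _; apply: clifford_of_gen; right; left.
Qed.

Lemma clifford_clear_sqrt2 v k l :
  unit_vec v -> has_rep v k l -> exists2 W, clifford W & gauss_rep (W *m v) 0 l.
Proof.
move=> unitv /has_repE[]; case: k => [|[|[|k]]] // _ repv.
- by exists 1%:M; [apply: clifford_id | rewrite mul1mx].
- exact: clifford_clear_sqrt2_exp1 unitv repv.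
- exact: clifford_clear_sqrt2_exp2 unitv repv.
Qed.

Lemma lde_clifford_image W u k l :
  unit_vec u -> lde u k l -> clifford W -> gauss_rep (W *m u) 0 l -> lde (W *m u) 0 l.
Proof.
move=> unitu [_ [_ lmin_u]] cW repWu.
have rep0 : has_rep (W *m u) 0 l by apply/has_repE.
split; split; [by exists l | by [] | by exists 0%N |].
move=> k' l' /has_repE[_ repWu'].
have [V cV VW] := clifford_inv cW.
have [j] := clifford_gauss_rep cV repWu'; rewrite mulmxA VW mul1mx => repu.
have [k'' k''_le2 repu''] := gauss_rep_sqrt2_le2 unitu repu.
by apply: (lmin_u k''); apply/has_repE; split.
Qed.

Theorem lemma6p8 (u : 'cV[algC]_2) (k l : nat) :
  unit_vec u -> has_rep u k l -> lde u k l ->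
  exists W : 'M[algC]_2, clifford W /\ lde (W *m u) 0 l.
Proof.
move=> unitu repu ldeu.
have [W cW repWu] := clifford_clear_sqrt2 unitu repu.
by exists W; split => //; apply: lde_clifford_image ldeu cW repWu.
Qed.
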